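(* Let $K\subset[0,1]^N$ be a self-similar sponge. Then for every $x\in(0,1)^N\cap K$, every tangent $T\in\mathrm{Tan}(K,x)$ is locally self-similar.
   Context: A self-similar sponge is the attractor $K$ (unique nonempty compact set with $K=\bigcup_iS_i(K)$) of a system $\{S_i(y)=k^{-1}y+p_i:[0,1]^N\to[0,1]^N\}_{i=1}^m$ with $k\ge2$ an integer and $p_1,\dots,p_m$ distinct points of $\{0,\frac1k,\dots,\frac{k-1}k\}^N$. A set $F\subset\mathbb{R}^N$ is locally self-similar if for all $x,y\in F$ and $\rho_1,\rho_2>0$ there is a similarity $g:\mathbb{R}^N\to\mathbb{R}^N$ such that $g(B(x,\rho_1)\cap F)$ is a subset of $B(y,\rho_2)\cap F$ and is open relative to $F$. With $\mathrm{exc}(A,B)=\sup_{a\in A}\inf_{b\in B}|a-b|$, closed sets $X_m\to X$ (Attouch–Wets) iff for every $r>0$, $\mathrm{exc}(X_m\cap\overline{B}(\mathbf{0},r),X)\to0$ and $\mathrm{exc}(X\cap\overline{B}(\mathbf{0},r),X_m)\to0$; a closed $T\ni\mathbf{0}$ is in $\mathrm{Tan}(K,x)$ if $r_j^{-1}(K-x)\to T$ for some $r_j\downarrow0$. *)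

From HB Require Import structures.
From mathcomp Require Import all_boot all_order all_algebra.
From mathcomp Require Import all_classical all_reals all_analysis.
Set Implicit Arguments. Unset Strict Implicit. Unset Printing Implicit Defensive.
Import Order.TTheory GRing.Theory Num.Theory.
Import numFieldNormedType.Exports.
Local Open Scope classical_set_scope.
Local Open Scope ring_scope.

Section Defs.
Variables (R : realType) (N : nat).
Notation V := 'rV[R]_N.

Definition edist (a b : V) : R :=
  Num.sqrt (\sum_(i < N) (a ord0 i - b ord0 i) ^+ 2).

Definition eball (x : V) (rho : R) : set V := [set y | edist x y < rho].
Definition ecball (x : V) (r : R) : set V := [set y | edist x y <= r].

Definition similarity (g : V -> V) : Prop :=
  exists2 lam : R, 0 < lam & forall a b, edist (g a) (g b) = lam * edist a b.

Definition rel_open (F A : set V) : Prop := exists2 U : set V, open U & A = U `&` F.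

Definition locally_self_similar (F : set V) : Prop :=
  forall x y : V, F x -> F y -> forall rho1 rho2 : R, 0 < rho1 -> 0 < rho2 ->
    exists g : V -> V, [/\ similarity g,
      g @` (eball x rho1 `&` F) `<=` eball y rho2 `&` F &
      rel_open F (g @` (eball x rho1 `&` F))].

(* exc(A,B) = sup_{a in A} inf_{b in B} |a - b|, in the extended reals;
   inf over empty B is +oo; sup over empty A is taken to be 0
   (the supremum of a family of nonnegative quantities). *)
Definition exc (A B : set V) : \bar R :=
  ereal_sup ([set 0%E] `|`
    [set ereal_inf [set (edist a b)%:E | b in B] | a in A]).

Definition AW_cvg (Xs : nat -> set V) (X : set V) : Prop :=
  forall r : R, 0 < r ->
    (fun m => exc (Xs m `&` ecball 0 r) X) @ \oo --> 0%E /\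
    (fun m => exc (X `&` ecball 0 r) (Xs m)) @ \oo --> 0%E.

Definition blowup (K : set V) (x : V) (r : R) : set V :=
  [set r^-1 *: (y - x) | y in K].

Definition tangent (K : set V) (x : V) (T : set V) : Prop :=
  [/\ closed T, T 0 &
    exists r : nat -> R, [/\ forall j, 0 < r j, forall j, r j.+1 < r j,
      r @ \oo --> 0 & AW_cvg (fun j => blowup K x (r j)) T]].

Definition sponge_map (k : nat) (p : V) (y : V) : V := k%:R^-1 *: y + p.

Definition self_similar_sponge (K : set V) : Prop :=
  exists (k m : nat) (p : 'I_m -> V),
    [/\ (2 <= k)%N, injective p,
      forall i j, exists l : 'I_k, p i ord0 j = l%:R / k%:R &
      [/\ K !=set0, compact K &
      K = \bigcup_(i in [set: 'I_m]) (sponge_map k (p i) @` K)]].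

Definition open_cube : set V := [set x | forall j, 0 < x ord0 j < 1].
End Defs.

(* Choose exponents n_j with r_j k^(n_j) in [1, k].  Since k^n K is the union of the integer
   translates K + z over a finite set of offsets z, the blow-up r_j^-1 (K - x), rescaled by
   s_j = r_j k^(n_j) and shifted by the fractional part t_j of k^(n_j) x, is again a union of
   integer translates of K.  Near a bounded region only finitely many patterns of translates
   occur, so along a subsequence the pattern is constant while (s_j, t_j) -> (s, t); in the
   limit, s T + t agrees on any ball with that finite union of translates.  Undoing one zoom
   k^(n_j) with j large then maps every ball of T by a similarity onto a relatively open piece
   of K lying in (0,1)^N (this is where x in (0,1)^N is used).  For two balls of T, compose the
   chart of the first with a contraction y |-> k^-n (y + z) of K into a small cell next to the
   image of the centre of the second, and with the inverse of the second chart; the image is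
   relatively open because a point of the open unit cube lies in no other integer translate
   of the closed unit cube. *)

From Pilot Require Import Defs.
From mathcomp Require Import all_boot all_order all_algebra.
From mathcomp Require Import all_classical all_reals all_analysis.
From mathcomp Require Import ring lra zify.
(* Re-imported so that [edist] is the Euclidean distance of [Defs]; likewise the [edist_*]
   lemmas below shadow the library's lemmas about its extended distance. *)
Import Pilot.Defs.
Set Implicit Arguments. Unset Strict Implicit. Unset Printing Implicit Defensive.
Import Order.TTheory GRing.Theory Num.Theory.
Import numFieldNormedType.Exports.
Local Open Scope classical_set_scope.
Local Open Scope ring_scope.

Section Euclidean.
Variables (R : realType) (N : nat).
Local Notation V := 'rV[R]_N.

Lemma sum_sqr_le_sqr_sum_norm (I : Type) (s : seq I) (f : I -> R) :
  \sum_(i <- s) f i ^+ 2 <= (\sum_(i <- s) `|f i|) ^+ 2.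
Proof.
elim: s => [|a s IH]; first by rewrite !big_nil expr0n.
rewrite !big_cons -[f a ^+ 2]real_normK ?num_real //.
have : 0 <= \sum_(i <- s) `|f i| by apply: sumr_ge0.
have := normr_ge0 (f a); nra.
Qed.

Lemma cauchy_schwarz (u v : 'I_N -> R) :
  \sum_i u i * v i <= Num.sqrt (\sum_i u i ^+ 2) * Num.sqrt (\sum_i v i ^+ 2).
Proof.
set S := \sum_i u i ^+ 2; set T := \sum_i v i ^+ 2; set P := \sum_i u i * v i.
have S0 : 0 <= S by apply: sumr_ge0 => i _; exact: sqr_ge0.
have T0 : 0 <= T by apply: sumr_ge0 => i _; exact: sqr_ge0.
have quad_ge0 l : 0 <= S + 2 * l * P + l ^+ 2 * T.
  have : 0 <= \sum_i (u i + l * v i) ^+ 2 by apply: sumr_ge0 => i _; exact: sqr_ge0.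
  congr (_ <= _); rewrite /S /T /P !mulr_sumr -!big_split /=.
  by apply: eq_bigr => i _; ring.
have PST : P ^+ 2 <= S * T.
  have [T_eq0|T_neq0] := eqVneq T 0.
    have v0 i : v i = 0.
      apply/eqP; rewrite -sqrf_eq0; move/eqP: T_eq0.
      by rewrite psumr_eq0 => [/allP/(_ i (mem_index_enum _))|j _] //; exact: sqr_ge0.
    have -> : P = 0 by rewrite /P big1 // => i _; rewrite v0 mulr0.
    by rewrite T_eq0 mulr0 expr0n.
  have T_gt0 : 0 < T by rewrite lt_neqAle eq_sym T_neq0 T0.
  (* the discriminant argument, at the minimum l = - P / T *)
  have := quad_ge0 (- P / T).
  have -> : S + 2 * (- P / T) * P + (- P / T) ^+ 2 * T = S - P ^+ 2 / T.
    by field; rewrite T_neq0.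
  by rewrite subr_ge0 ler_pdivrMr.
rewrite -sqrtrM //; apply: le_trans (ler_norm P) _.
by rewrite -sqrtr_sqr ler_sqrt // mulr_ge0.
Qed.

Lemma edist_ge0 (a b : V) : 0 <= edist a b.
Proof. exact: sqrtr_ge0. Qed.

Lemma edist_xx (a : V) : edist a a = 0.
Proof. by rewrite /edist big1 ?sqrtr0 // => i _; rewrite subrr expr0n. Qed.

Lemma coord_le_edist (a b : V) i : `|a ord0 i - b ord0 i| <= edist a b.
Proof.
rewrite /edist -sqrtr_sqr ler_sqrt; last by apply: sumr_ge0 => j _; exact: sqr_ge0.
by rewrite (bigD1 i) //= lerDl; apply: sumr_ge0 => j _; exact: sqr_ge0.
Qed.

Lemma edist_le_coord_bound (a b : V) (d : R) :
  (forall i, `|a ord0 i - b ord0 i| <= d) -> edist a b <= N%:R * d.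
Proof.
move=> ab_le; have sum_ge0 : 0 <= \sum_(i < N) `|a ord0 i - b ord0 i| by apply: sumr_ge0.
apply: (@le_trans _ _ (\sum_(i < N) `|a ord0 i - b ord0 i|)).
  rewrite /edist -(ger0_norm sum_ge0) -sqrtr_sqr ler_sqrt; last exact: sqr_ge0.
  exact: sum_sqr_le_sqr_sum_norm.
apply: le_trans (ler_sum _ (fun i _ => ab_le i)) _.
by rewrite sumr_const card_ord mulr_natl.
Qed.

Lemma edist_triangle (a b c : V) : edist a c <= edist a b + edist b c.
Proof.
rewrite /edist.
set u := fun i => a ord0 i - b ord0 i; set v := fun i => b ord0 i - c ord0 i.
have -> : \sum_(i < N) (a ord0 i - c ord0 i) ^+ 2 = \sum_i (u i + v i) ^+ 2.
  by apply: eq_bigr => i _; rewrite /u /v; congr (_ ^+ 2); ring.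
rewrite -/(\sum_i u i ^+ 2) -/(\sum_i v i ^+ 2).
have S0 : 0 <= \sum_i u i ^+ 2 by apply: sumr_ge0 => i _; exact: sqr_ge0.
have T0 : 0 <= \sum_i v i ^+ 2 by apply: sumr_ge0 => i _; exact: sqr_ge0.
have sqr_sum : \sum_i (u i + v i) ^+ 2 =
    \sum_i u i ^+ 2 + 2 * \sum_i u i * v i + \sum_i v i ^+ 2.
  by rewrite mulr_sumr -!big_split /=; apply: eq_bigr => i _; ring.
have := cauchy_schwarz u v; have := sqr_sqrtr S0; have := sqr_sqrtr T0.
have := sqrtr_ge0 (\sum_i u i ^+ 2); have := sqrtr_ge0 (\sum_i v i ^+ 2).
set A := Num.sqrt (\sum_i u i ^+ 2); set B := Num.sqrt (\sum_i v i ^+ 2).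
move=> B0 A0 sB sA cs.
rewrite -(ger0_norm (addr_ge0 A0 B0)) -sqrtr_sqr ler_sqrt; last exact: sqr_ge0.
by rewrite sqr_sum -sA -sB sqrrD mulr2n; lra.
Qed.

Lemma coord_lt_of_ball (a b : V) e : ball a e b -> forall i, `|a ord0 i - b ord0 i| < e.
Proof. by move=> [_ ab_lt] i; exact: ab_lt ord0 i. Qed.

Lemma ball_of_coord_lt (a b : V) e : 0 < e ->
  (forall i, `|a ord0 i - b ord0 i| < e) -> ball a e b.
Proof. by move=> e0 ab_lt; split => // i j; rewrite (ord1 i); exact: ab_lt. Qed.

Lemma open_eball (c : V) r : open (eball c r).
Proof.
rewrite openE => y cy; apply/nbhs_ballP.
set d := r - edist c y; have d0 : 0 < d by rewrite subr_gt0.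
have Np : 0 < N%:R + 1 :> R by rewrite ltr_wpDl.
have dN0 : 0 < d / (N%:R + 1) by exact: divr_gt0.
exists (d / (N%:R + 1)) => // z /coord_lt_of_ball yz.
apply: le_lt_trans (edist_triangle c y z) _.
have := edist_le_coord_bound (fun i => ltW (yz i)).
have -> : N%:R * (d / (N%:R + 1)) = d - d / (N%:R + 1) by field; rewrite gt_eqF.
by move: dN0; rewrite /d; lra.
Qed.

Lemma closed_coord_approx (A : set V) (a : V) : closed A ->
  (forall e, 0 < e -> exists2 b, A b & forall i, `|a ord0 i - b ord0 i| < e) -> A a.
Proof.
move=> Acl near_a; apply: Acl => U /nbhs_ballP [e e0 eU].
by have [b Ab ab] := near_a e e0; exists b; split => //; apply/eU/ball_of_coord_lt.
Qed.

Lemma closed_edist_approx (A : set V) (a : V) : closed A ->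
  (forall e, 0 < e -> exists2 b, A b & edist a b < e) -> A a.
Proof.
move=> Acl near_a; apply: closed_coord_approx => // e e0.
by have [b Ab ab] := near_a e e0; exists b => // i; exact: le_lt_trans (coord_le_edist _ _ i) ab.
Qed.

Lemma exc_lt_near (A B : set V) e : (exc A B < e%:E)%E ->
  forall a, A a -> exists2 b, B b & edist a b < e.
Proof.
move=> exc_lt a Aa.
have : (ereal_inf [set (edist a b)%:E | b in B] < e%:E)%E.
  by apply: le_lt_trans exc_lt; apply: ereal_sup_ubound; right; exists a.
by move/ereal_inf_lt => [_ [b Bb <-]]; rewrite lte_fin; exists b.
Qed.

Lemma AW_cvg_near (Xs : nat -> set V) (X : set V) r e : AW_cvg Xs X -> 0 < r -> 0 < e ->
  exists n0, forall n, (n0 <= n)%N ->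
    (forall a, (Xs n `&` ecball 0 r) a -> exists2 b, X b & edist a b < e) /\
    (forall a, (X `&` ecball 0 r) a -> exists2 b, Xs n b & edist a b < e).
Proof.
move=> /(_ r) AW r0 e0; have [cvg1 cvg2] := AW r0.
have near0 (f : nat -> \bar R) : f @ \oo --> 0%E ->
    exists n0, forall n, (n0 <= n)%N -> (f n < e%:E)%E.
  move=> /(_ _ (open_ereal_lt' (_ : 0%E < e%:E)%E)); rewrite lte_fin => /(_ e0) [n0 _ fn].
  by exists n0 => n n0n; exact: fn.
have [n1 h1] := near0 _ cvg1; have [n2 h2] := near0 _ cvg2.
exists (maxn n1 n2) => n; rewrite geq_max => /andP[n1n n2n].
by split; apply: exc_lt_near; [exact: h1|exact: h2].
Qed.

End Euclidean.

Section Affine.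
Variables (R : realType) (N : nat).
Local Notation V := 'rV[R]_N.

Definition aff (l : R) (b v : V) : V := l *: v + b.

Lemma affE l b v i : aff l b v ord0 i = l * v ord0 i + b ord0 i.
Proof. by rewrite !mxE. Qed.

Lemma edist_aff l b u v : 0 <= l -> edist (aff l b u) (aff l b v) = l * edist u v.
Proof.
move=> l0; rewrite /edist.
have -> : \sum_(i < N) (aff l b u ord0 i - aff l b v ord0 i) ^+ 2 =
    l ^+ 2 * \sum_(i < N) (u ord0 i - v ord0 i) ^+ 2.
  by rewrite mulr_sumr; apply: eq_bigr => i _; rewrite !affE; ring.
by rewrite sqrtrM ?sqr_ge0 // sqrtr_sqr ger0_norm.
Qed.

Lemma similarity_aff l b : 0 < l -> similarity (aff l b).
Proof. by move=> l0; exists l => // u v; rewrite edist_aff // ltW. Qed.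

Lemma aff_image_eballI (F : set V) l b x rho : 0 < l ->
  (forall v, edist x v < rho -> F v <-> F (aff l b v)) ->
  aff l b @` (eball x rho `&` F) = eball (aff l b x) (l * rho) `&` F.
Proof.
move=> l0 F_aff; have l_neq0 : l != 0 by rewrite gt_eqF.
apply/seteqP; split => [_ [v [xv Fv] <-]|w [xw Fw]].
  by split; [rewrite /eball /= edist_aff ?ltr_pM2l // ltW|exact: (F_aff v xv).1].
pose v := aff l^-1 (- (l^-1 *: b)) w.
have vw : aff l b v = w by apply/rowP => i; rewrite !affE !mxE; field.
have xv : edist x v < rho by move: xw; rewrite /eball /= -vw edist_aff ?ltr_pM2l // ltW.
by exists v => //; split => //; apply/(F_aff v xv); rewrite vw.
Qed.

End Affine.

Lemma exists_small_factor (R : realType) (C e : R) : 0 <= C -> 0 < e ->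
  exists d, [/\ 0 < d, d <= 1, d * C < e & d * C < 1].
Proof.
move=> C0 e0; set m := Num.min e 1.
have m0 : 0 < m by rewrite lt_min e0 ltr01.
have [me m1] : m <= e /\ m <= 1 by rewrite !ge_min !lexx orbT.
have dCm : m / (C + 1) * C < m by rewrite mulrAC ltr_pdivrMr; nra.
exists (m / (C + 1)); split; [|by rewrite ler_pdivrMr; nra|lra|lra].
by apply: divr_gt0 => //; lra.
Qed.

Lemma affine_perturbation_le (R : realType) (u1 u2 w1 w2 y1 y2 A B D : R) :
  `|u1 - u2| < D -> `|w1| <= A -> `|w1 - w2| < D -> 0 <= u2 <= B -> `|y1 - y2| < D ->
  `|(u1 * w1 + y1) - (u2 * w2 + y2)| <= D * (A + B + 1).
Proof.
move=> du wA dw /andP[u20 u2B] dy.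
have -> : (u1 * w1 + y1) - (u2 * w2 + y2) = (u1 - u2) * w1 + u2 * (w1 - w2) + (y1 - y2).
  by ring.
apply: le_trans (ler_normD _ _) _; apply: le_trans (lerD (ler_normD _ _) (lexx _)) _.
rewrite !normrM (ger0_norm u20).
have D0 : 0 <= D by apply: le_trans (ltW du).
have : `|u1 - u2| * `|w1| <= D * A by apply: ler_pM => //; exact: ltW.
have : u2 * `|w1 - w2| <= B * D by apply: ler_pM => //; exact: ltW.
lra.
Qed.

Lemma affine_inv_perturbation_le (R : realType) (s1 s2 w t1 t2 A B D : R) :
  1 <= s1 -> 1 <= s2 -> `|s1 - s2| < D -> `|w| <= A -> 0 <= t1 <= B -> `|t1 - t2| < D ->
  `|(w - t1) / s1 - (w - t2) / s2| <= D * (A + B + 1).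
Proof.
move=> s11 s21 ds wA /andP[t10 t1B] dt.
have s1_neq0 : s1 != 0 by rewrite gt_eqF //; lra.
have s2_neq0 : s2 != 0 by rewrite gt_eqF //; lra.
have -> : (w - t1) / s1 - (w - t2) / s2 =
    ((s2 - s1) * (w - t1)) / (s1 * s2) + (t2 - t1) / s2 by field; rewrite s1_neq0 s2_neq0.
have D0 : 0 <= D by apply: le_trans (ltW ds).
have s12 : 1 <= s1 * s2 by rewrite -[1]mulr1 ler_pM.
have div_le (a s : R) : 1 <= s -> `|a / s| <= `|a|.
  move=> s_ge1; rewrite normf_div (ger0_norm (le_trans ler01 s_ge1)) ler_pdivrMr; last lra.
  by rewrite ler_peMr.
apply: le_trans (ler_normD _ _) _.
have := div_le ((s2 - s1) * (w - t1)) _ s12; have := div_le (t2 - t1) _ s21.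
have : `|(s2 - s1) * (w - t1)| <= D * (A + B).
  rewrite normrM; apply: ler_pM => //; first by rewrite distrC ltW.
  by apply: le_trans (ler_normB _ _) _; rewrite (ger0_norm t10); lra.
have : `|t2 - t1| <= D by rewrite distrC ltW.
lra.
Qed.

Lemma recurrent_value (T : finType) (f : nat -> T) :
  exists c, forall n0, exists2 j, (n0 <= j)%N & f j = c.
Proof.
apply: contrapT => no_rec.
have /fin_all_exists [g fg] : forall c, exists n0, forall j, (n0 <= j)%N -> f j != c.
  move=> c; apply: contrapT => c_rec; apply: no_rec; exists c => n0.
  apply: contrapT => no_j; apply: c_rec; exists n0 => j n0j; apply/eqP => fj.
  by apply: no_j; exists j.
have := fg (f (\max_c g c)) (\max_c g c); rewrite eqxx.
by move/(_ (leq_bigmax_cond _ isT)).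
Qed.

Lemma compact_cluster (X : topologicalType) (A : set X) (u : nat -> X) :
  compact A -> (forall i, A (u i)) ->
  exists2 l, A l & forall U, nbhs l U -> forall n0, exists2 i, (n0 <= i)%N & U (u i).
Proof.
move=> Ac Au; have uA : (u @ \oo) A by exists 0%N => // i _; exact: Au.
have [l [Al l_cluster]] := Ac _ _ uA.
exists l => // U lU n0.
have un0 : (u @ \oo) (u @` [set i | (n0 <= i)%N]) by exists n0 => // i n0i; exists i.
by have [_ [[i n0i <-] Uui]] := l_cluster _ U un0 lU; exists i.
Qed.

Section Lattice.
Variables (R : realType) (N : nat).
Local Notation V := 'rV[R]_N.

Definition int_row (v : V) := forall i, exists z : int, v ord0 i = z%:~R.

Lemma int_rowB (a b : V) : int_row a -> int_row b -> int_row (a - b).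
Proof.
move=> ia ib i; rewrite !mxE; have [u ->] := ia i; have [v ->] := ib i.
by exists (u - v); rewrite intrB.
Qed.

Definition floor_row (v : V) : V := \row_i (Num.floor (v ord0 i))%:~R.

Lemma int_floor_row (v : V) : int_row (floor_row v).
Proof. by move=> i; exists (Num.floor (v ord0 i)); rewrite mxE. Qed.

Lemma frac_row_bounds (v : V) i : 0 <= (v - floor_row v) ord0 i < 1.
Proof.
rewrite !mxE; have := floor_le (v ord0 i); have := floorD1_gt (v ord0 i).
by rewrite intrD => h1 h2; apply/andP; split; lra.
Qed.

Lemma cube_int_translate_eq (u q z z' : V) : open_cube u ->
  (forall i, 0 <= q ord0 i <= 1) -> int_row z -> int_row z' -> u + z = q + z' -> u = q.
Proof.
move=> u01 q01 iz iz' uzq; apply/rowP => i.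
have := congr1 (fun w : V => w ord0 i) uzq; rewrite !mxE.
have [a ->] := iz i; have [b ->] := iz' i => uzqi.
have ba : ((b - a)%:~R : R) = u ord0 i - q ord0 i by rewrite intrB; lra.
have /andP[u0 u1] := u01 i; have /andP[q0 q1] := q01 i.
have ba_lt1 : ((b - a)%:~R : R) < 1%:~R by rewrite ba; lra.
have ba_gtN1 : ((-1)%:~R : R) < (b - a)%:~R by rewrite ba mulrN1z; lra.
rewrite ltr_int in ba_lt1; rewrite ltr_int in ba_gtN1.
have ba0 : b - a = 0 by lia.
by move: ba; rewrite ba0 mulr0z; lra.
Qed.

Lemma open_cube_nbhs (x : V) : open_cube x ->
  exists2 d, 0 < d & forall y : V, (forall i, `|y ord0 i - x ord0 i| < d) -> open_cube y.
Proof.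
move=> x01.
suff [d d0 dx] : exists2 d, 0 < d & forall i, d <= x ord0 i /\ d <= 1 - x ord0 i.
  exists d => // y yx i; have [dx0 dx1] := dx i.
  by have := yx i; rewrite ltr_norml => /andP[yx1 yx2]; apply/andP; split; lra.
suff : forall s : seq 'I_N,
    exists2 d, 0 < d & forall i, i \in s -> d <= x ord0 i /\ d <= 1 - x ord0 i.
  by move=> /(_ (enum 'I_N)) [d d0 dx]; exists d => // i; apply: dx; rewrite mem_enum.
elim => [|a s [d d0 dx]]; first by exists 1.
have /andP[xa0 xa1] := x01 a.
exists (Num.min d (Num.min (x ord0 a) (1 - x ord0 a))).
  by rewrite !lt_min d0 xa0 subr_gt0 xa1.
move=> i; rewrite inE => /orP[/eqP ->|si]; first by rewrite !ge_min !lexx !orbT.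
by have [? ?] := dx i si; rewrite !ge_min; split; apply/orP; left.
Qed.

(* [box_pt M] enumerates the integer points of the box [-M, M]^N by a finite type. *)
Definition box_pt (M : nat) (c : {ffun 'I_N -> 'I_(M.*2.+1)}) : V :=
  \row_i ((c i : nat)%:R - M%:R).
Arguments box_pt : clear implicits.

Lemma box_pt_bound M c i : `|box_pt M c ord0 i| <= M%:R.
Proof.
rewrite mxE ler_norml; have := ltn_ord (c i); set a := (c i : nat) => aM.
by rewrite lerBrDr addrC subrr ler0n lerBlDr -natrD ler_nat; lia.
Qed.

Lemma box_ptP M (w : V) : int_row w -> (forall i, `|w ord0 i| <= M%:R) ->
  exists c, box_pt M c = w.
Proof.
move=> /fin_all_exists [a wa] wM.
exists [ffun i => inord (absz (a i + M%:Z))]; apply/rowP => i.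
have := wM i; rewrite wa -intr_norm -[M%:R]/(M%:Z%:~R) ler_int ler_norml => /andP[aM Ma].
have aM0 : 0 <= a i + M%:Z by lia.
rewrite !mxE ffunE inordK; last by lia.
have -> : ((absz (a i + M%:Z))%:R : R) = (a i + M%:Z)%:~R by rewrite -{2}(gez0_abs aM0).
by rewrite intrD; ring.
Qed.

Lemma coord_le_norm (v : V) i : `|v ord0 i| <= `|v|.
Proof.
rewrite [leRHS]/Num.Def.normr /= mx_normrE; apply/bigmax_geP; right.
by exists (ord0, i).
Qed.

End Lattice.
Arguments box_pt {R N} M c.

Lemma contraction_ub (R : realType) (S : set R) (a c : R) : 0 <= a < 1 -> has_ubound S ->
  (forall y, S y -> exists2 y', S y' & y <= a * y' + c) -> forall y, S y -> y <= c / (1 - a).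
Proof.
move=> /andP[a0 a1] Sub S_contr y Sy.
have supS : sup S <= a * sup S + c.
  apply: ge_sup => [|z Sz]; first by exists y.
  have [z' Sz' zz'] := S_contr z Sz; apply: le_trans zz' _.
  by rewrite lerD2r ler_wpM2l // ub_le_sup.
apply: le_trans (ub_le_sup Sub Sy) _.
by rewrite ler_pdivlMr ?subr_gt0 //; lra.
Qed.

Section Powers.
Variables (R : realType) (k : nat).
Hypothesis k2 : (2 <= k)%N.

Lemma kR_gt1 : 1 < (k%:R : R).
Proof. by rewrite ltr1n. Qed.

Lemma kR_gt0 : 0 < (k%:R : R).
Proof. exact: lt_trans ltr01 kR_gt1. Qed.

Lemma exists_pow_gt (y : R) : exists n : nat, y < k%:R ^+ n.
Proof.
have [y0|y0] := lerP y 0; first by exists 0%N; rewrite expr0; lra.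
exists (Num.bound y); apply: lt_le_trans (archi_boundP (ltW y0)) _.
by rewrite -natrX ler_nat ltnW // ltn_expl.
Qed.

Lemma exists_pow_rescale (r : R) : 0 < r -> r <= 1 ->
  exists n : nat, 1 <= r * k%:R ^+ n <= k%:R.
Proof.
move=> r0 r1; have kp := kR_gt0.
have ex_n : exists n, 1 <= r * k%:R ^+ n.
  have [n rn] := exists_pow_gt r^-1.
  by exists n; rewrite -ler_pdivrMl // mulr1 ltW.
case: (ex_minnP ex_n) => -[|n] rn n_min.
  by exists 0%N; rewrite rn expr0 mulr1 /=; have := kR_gt1; lra.
have rkn : r * k%:R ^+ n < 1 by rewrite ltNge; apply/negP => /n_min; rewrite ltnn.
by exists n.+1; rewrite rn exprS mulrCA -[leRHS]mulr1 ler_pM2l // ltW.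
Qed.

End Powers.

Section Sponge.
Variables (R : realType) (N : nat).
Local Notation V := 'rV[R]_N.
Variables (K : set V) (k m : nat) (p : 'I_m -> V).
Hypotheses (k2 : (2 <= k)%N)
  (p_grid : forall i j, exists l : 'I_k, p i ord0 j = l%:R / k%:R)
  (Kc : compact K)
  (Keq : K = \bigcup_(i in [set: 'I_m]) (sponge_map k (p i) @` K)).

Lemma sponge_decomp u : K u -> exists i, exists2 q, K q & u = k%:R^-1 *: q + p i.
Proof. by rewrite {1}Keq => -[i _ [q Kq <-]]; exists i, q. Qed.

Lemma sponge_map_in i q : K q -> K (k%:R^-1 *: q + p i).
Proof. by move=> Kq; rewrite Keq; exists i => //; exists q. Qed.

Lemma grid_bounds i j : 0 <= p i ord0 j <= 1 - k%:R^-1.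
Proof.
have [l ->] := p_grid i j; have kp := kR_gt0 R k2.
have lk : (l%:R : R) <= k%:R - 1 by have := ltn_ord l; rewrite -[1]/(1%:R) -natrB ?ler_nat; lia.
by rewrite divr_ge0 //= ler_pdivrMr // mulrBl mul1r mulVf ?gt_eqF.
Qed.

Lemma sponge_in_cube v : K v -> forall i, 0 <= v ord0 i <= 1.
Proof.
move=> Kv i; have kp := kR_gt0 R k2; have k1 := kR_gt1 R k2.
have [B [_ KB]] := compact_bounded Kc.
have coordB w : K w -> `|w ord0 i| <= B + 1.
  by move=> Kw; apply: le_trans (coord_le_norm w i) _; apply: KB; rewrite ?ltrDl.
have kinv : 0 <= (k%:R^-1 : R) < 1 by rewrite invr_ge0 ltW //= invf_lt1.
have k1_neq0 : 1 - (k%:R^-1 : R) != 0 by rewrite subr_eq0 eq_sym lt_eqF //; case/andP: kinv.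
have ub : v ord0 i <= (1 - k%:R^-1) / (1 - k%:R^-1).
  apply: (contraction_ub (S := [set w ord0 i | w in K]) kinv); last by exists v.
    by exists (B + 1) => _ [w Kw <-]; exact: le_trans (ler_norm _) (coordB w Kw).
  move=> _ [w Kw <-]; have [j [q Kq ->]] := sponge_decomp Kw.
  exists (q ord0 i); first by exists q.
  by rewrite !mxE lerD2l; case/andP: (grid_bounds j i).
have lb : - v ord0 i <= 0 / (1 - k%:R^-1).
  apply: (contraction_ub (S := [set - w ord0 i | w in K]) kinv); last by exists v.
    by exists (B + 1) => _ [w Kw <-]; have := coordB w Kw; rewrite ler_norml => /andP[]; lra.
  move=> _ [w Kw <-]; have [j [q Kq ->]] := sponge_decomp Kw.
  exists (- q ord0 i); first by exists q.
  by rewrite !mxE addr0 opprD mulrN lerBlDr lerDl; case/andP: (grid_bounds j i).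
by move: ub lb; rewrite divff // mul0r; lra.
Qed.

(* [offsets n] is the set of integer vectors [z] such that [k^-n (K + z)] is a level-[n]
   piece of [K]. *)
Fixpoint offsets (n : nat) : set V :=
  if n is n'.+1 then [set k%:R *: (p i + z) | i in [set: 'I_m] & z in offsets n']
  else [set 0].

Lemma int_offsets n z : offsets n z -> int_row z.
Proof.
elim: n z => [_ -> i|n IH _ [i _ [z zn <-]] j]; first by exists 0; rewrite mxE.
have [a za] := IH z zn j; have [l pl] := p_grid i j.
exists (l%:Z + a * k%:Z); rewrite !mxE pl za intrD intrM -!pmulrn.
by field; rewrite gt_eqF // (kR_gt0 R k2).
Qed.

Lemma offsets_scale_in n q z : K q -> offsets n z -> K ((k%:R ^+ n)^-1 *: (q + z)).
Proof.
have k_neq0 : k%:R != 0 :> R by rewrite gt_eqF // (kR_gt0 R k2).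
elim: n q z => [q _ Kq ->|n IH q _ Kq [i _ [z zn <-]]].
  by rewrite expr0 invr1 scale1r addr0.
have -> : (k%:R ^+ n.+1)^-1 *: (q + k%:R *: (p i + z)) =
    (k%:R ^+ n)^-1 *: ((k%:R^-1 *: q + p i) + z).
  by apply/rowP => j; rewrite !mxE exprS; field; rewrite k_neq0 expf_neq0.
exact/IH/zn/sponge_map_in.
Qed.

Lemma sponge_scale_decomp n u : K u ->
  exists q z, [/\ K q, offsets n z & k%:R ^+ n *: u = q + z].
Proof.
have k_neq0 : k%:R != 0 :> R by rewrite gt_eqF // (kR_gt0 R k2).
move=> Ku; elim: n => [|n [q [z [Kq zn uqz]]]].
  by exists u, 0; rewrite expr0 scale1r addr0.
have [i [q' Kq' qE]] := sponge_decomp Kq.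
exists q', (k%:R *: (p i + z)); split => //; first by exists i => //; exists z.
apply/rowP => j; have := congr1 (fun w : V => w ord0 j) uqz.
by rewrite qE !mxE exprS -mulrA => ->; field.
Qed.

Lemma sponge_zoom u0 e : K u0 -> 0 < e -> exists l b, 0 < l /\
  forall u, open_cube u -> edist u0 (aff l b u) < e /\ (K (aff l b u) <-> K u).
Proof.
move=> Ku0 e0; have [n Ne] := exists_pow_gt k2 (N%:R / e).
have kn0 : 0 < k%:R ^+ n :> R by rewrite exprn_gt0 // (kR_gt0 R k2).
have [q [z [Kq zn u0E]]] := sponge_scale_decomp n Ku0.
pose l : R := (k%:R ^+ n)^-1; have l0 : 0 < l by rewrite invr_gt0.
exists l, (l *: z); split => // u u01.
have -> : aff l (l *: z) u = l *: (u + z) by rewrite /aff scalerDr.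
split; last first.
  split => [Kuz|Ku]; last exact: offsets_scale_in.
  have [q' [z' [Kq' z'n uzE]]] := sponge_scale_decomp n Kuz.
  have uz : u + z = q' + z' by rewrite -uzE scalerA /l mulfV ?scale1r // gt_eqF.
  by rewrite (cube_int_translate_eq u01 (sponge_in_cube Kq') (int_offsets zn) (int_offsets z'n) uz).
have -> : u0 = l *: (q + z) by rewrite -u0E scalerA /l mulVf ?scale1r // gt_eqF.
apply: le_lt_trans (edist_le_coord_bound (d := l) _) _.
  move=> i; rewrite !mxE -mulrBr normrM (gtr0_norm l0) ler_piMr ?(ltW l0) //.
  by have /andP[? ?] := sponge_in_cube Kq i; have /andP[? ?] := u01 i; rewrite ler_norml; lra.
by rewrite /l ltr_pdivrMr // mulrC -ltr_pdivrMr.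
Qed.

End Sponge.

Section Charts.
Variables (R : realType) (N : nat).
Local Notation V := 'rV[R]_N.

Definition cube_chart (K F : set V) (x : V) (rho l : R) (b : V) : Prop :=
  0 < l /\ forall v, edist x v < rho -> open_cube (aff l b v) /\ (F v <-> K (aff l b v)).

Lemma locally_self_similar_of_charts (K F : set V) :
  (forall u0 e, K u0 -> 0 < e -> exists l b, 0 < l /\
    forall u, open_cube u -> edist u0 (aff l b u) < e /\ (K (aff l b u) <-> K u)) ->
  (forall x rho, F x -> 0 < rho -> exists l b, cube_chart K F x rho l b) ->
  locally_self_similar F.
Proof.
move=> zoom chart x1 y1 Fx1 Fy1 rho1 rho2 rho1_gt0 rho2_gt0.
have [l1 [b1 [l1_gt0 chart1]]] := chart x1 rho1 Fx1 rho1_gt0.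
have [l2 [b2 [l2_gt0 chart2]]] := chart y1 rho2 Fy1 rho2_gt0.
have y1y1 : edist y1 y1 < rho2 by rewrite edist_xx.
have Ky : K (aff l2 b2 y1) by apply/(chart2 y1 y1y1).2.
have [l [b [l_gt0 zoomP]]] := zoom _ (l2 * rho2) Ky (mulr_gt0 l2_gt0 rho2_gt0).
pose g := aff (l2^-1 * (l * l1)) (l2^-1 *: (l *: b1 + b - b2)).
have g_gt0 : 0 < l2^-1 * (l * l1) by rewrite !mulr_gt0 ?invr_gt0.
have gE v : aff l2 b2 (g v) = aff l b (aff l1 b1 v).
  by apply/rowP => i; rewrite !affE !mxE; field; rewrite gt_eqF.
have g_ball v : edist x1 v < rho1 -> edist y1 (g v) < rho2.
  move=> /chart1[/zoomP[+ _] _]; rewrite -gE edist_aff ?ltW //.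
  by rewrite ltr_pM2l.
have g_iff v : edist x1 v < rho1 -> F v <-> F (g v).
  move=> x1v; have [/zoomP[_ zoom_iff] chart1_iff] := chart1 v x1v.
  by rewrite chart1_iff (chart2 _ (g_ball v x1v)).2 gE zoom_iff.
exists g; split; first exact: similarity_aff.
  by move=> _ [v [x1v Fv] <-]; split; [exact: g_ball|exact: (g_iff v x1v).1].
exists (eball (g x1) (l2^-1 * (l * l1) * rho1)); first exact: open_eball.
exact: aff_image_eballI.
Qed.

End Charts.

Section Tangent.
Variables (R : realType) (N : nat).
Local Notation V := 'rV[R]_N.
Variables (K : set V) (k m : nat) (p : 'I_m -> V).
Hypotheses (k2 : (2 <= k)%N)
  (p_grid : forall i j, exists l : 'I_k, p i ord0 j = l%:R / k%:R)
  (Kc : compact K)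
  (Keq : K = \bigcup_(i in [set: 'I_m]) (sponge_map k (p i) @` K)).
Variables (x : V) (T : set V) (r : nat -> R) (lev : nat -> nat).
Hypotheses (x01 : open_cube x) (Tcl : closed T) (r_gt0 : forall j, 0 < r j)
  (r_cvg : r @ \oo --> 0) (blowup_cvg : AW_cvg (fun j => blowup K x (r j)) T)
  (lev_scale : forall j, r j <= 1 -> 1 <= r j * k%:R ^+ lev j <= k%:R).

Let K_cube := sponge_in_cube k2 p_grid Kc Keq.

Definition zoom j : R := k%:R ^+ lev j.
Definition scale j : R := r j * zoom j.
Definition shift j : V := floor_row (zoom j *: x).
(* Locked, so that [mxE] does not unfold it into its coordinates. *)
Definition frac j : V := locked (zoom j *: x - shift j).

Lemma fracE j : frac j = zoom j *: x - shift j.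
Proof. by rewrite /frac -lock. Qed.

Lemma frac_bounds j l : 0 <= frac j ord0 l < 1.
Proof. by rewrite fracE; exact: frac_row_bounds. Qed.

Lemma zoom_gt0 j : 0 < zoom j.
Proof. exact/exprn_gt0/(kR_gt0 R k2). Qed.

Lemma blowupP j pp : blowup K x (r j) pp <->
  exists q z, [/\ K q, offsets k p (lev j) z & scale j *: pp + frac j = q + (z - shift j)].
Proof.
have r_neq0 : r j != 0 by rewrite gt_eqF.
split => [[y Ky <-]|[q [z [Kq zn ppE]]]].
  have [q [z [Kq zn yE]]] := sponge_scale_decomp k2 Keq (lev j) Ky.
  exists q, z; split => //; apply/rowP => i; have := congr1 (fun w : V => w ord0 i) yE.
  rewrite fracE /scale !mxE -/(zoom j) => yEi.
  have -> : q ord0 i = zoom j * y ord0 i - z ord0 i by rewrite yEi; ring.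
  by field.
exists ((zoom j)^-1 *: (q + z)); first exact: (offsets_scale_in k2 Keq Kq zn).
apply/rowP => i; have := congr1 (fun w : V => w ord0 i) ppE; rewrite fracE /scale !mxE => ppEi.
have -> : q ord0 i + z ord0 i = r j * zoom j * pp ord0 i + zoom j * x ord0 i by lra.
by field; rewrite r_neq0 gt_eqF ?zoom_gt0.
Qed.

(* The integer points [w] of [[-M, M]^N] such that [K + w] occurs in the rescaled blow-up
   [scale j *: blowup K x (r j) + frac j]. *)
Definition code M j : {set {ffun 'I_N -> 'I_(M.*2.+1)}} :=
  [set c | `[< offsets k p (lev j) (box_pt M c + shift j) >]].

Lemma codeP M j c : c \in code M j <-> offsets k p (lev j) (box_pt M c + shift j).
Proof. by rewrite inE asboolE. Qed.

Lemma code_decomp M j q z (y : V) : K q -> offsets k p (lev j) z -> y = q + (z - shift j) ->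
  (forall l, `|y ord0 l| <= M%:R - 1) -> exists2 c, c \in code M j & y = q + box_pt M c.
Proof.
move=> Kq zn yE yM.
have z_int := int_rowB (int_offsets k2 p_grid zn) (int_floor_row (zoom j *: x)).
have [|c cE] := box_ptP (M := M) z_int.
  move=> l; have /andP[q0 q1] := K_cube Kq l; have := yM l.
  by rewrite yE !mxE !ler_norml => /andP[yl1 yl2]; apply/andP; split; lra.
by exists c; [apply/codeP; rewrite cE subrK|rewrite cE].
Qed.

Section Limit.
Variables (x' : V) (rho B : R) (M : nat) (C : {set {ffun 'I_N -> 'I_(M.*2.+1)}}).
Variables (s0 : R) (t0 : V).
Hypotheses (B_ge0 : 0 <= B) (ball_B : forall v, edist x' v < rho -> edist 0 v < B)
  (M_large : k%:R * (B + 1) + 2 <= M%:R)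
  (s0_bounds : 1 <= s0 <= k%:R) (t0_bounds : forall l, 0 <= t0 ord0 l <= k%:R)
  (scale_frac_cluster : forall e, 0 < e -> forall n0, exists j, [/\ (n0 <= j)%N, code M j = C,
     1 <= scale j <= k%:R, `|s0 - scale j| < e & forall l, `|t0 ord0 l - frac j ord0 l| < e]).

Lemma ball_coord_le_B v : edist x' v < rho -> forall l, `|v ord0 l| <= B.
Proof.
by move=> /ball_B vB l; have := coord_le_edist 0 v l; rewrite mxE sub0r normrN; lra.
Qed.

Definition translates : set V :=
  \bigcup_(c in [set c | c \in C]) [set w | K (w - box_pt M c)].

Lemma closed_translates : closed translates.
Proof.
apply: closed_bigcup => [|c _]; first exact: finite_finset.
have Kcl : closed K := compact_closed (@norm_hausdorff _ _) Kc.
move: Kcl; apply: (continuous_closedP (fun w : V => w - box_pt M c)).1 => w.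
exact: (cvgB cvg_id (cvg_cst (box_pt M c))).
Qed.

Lemma tangent_translates a : edist x' a < rho -> T a -> translates (s0 *: a + t0).
Proof.
move=> x'a Ta; apply: closed_coord_approx closed_translates _ => e e0.
have C0 : 0 <= B + k%:R + 1 by have := kR_gt0 R k2; move: B_ge0; lra.
have [d [d0 d1 dB _]] := exists_small_factor C0 e0.
have B1 : 0 < B + 1 by move: B_ge0; lra.
have [n0 near] := AW_cvg_near blowup_cvg B1 d0.
have [j [n0j codeC /andP[s1 sk] s0j t0j]] := scale_frac_cluster d0 n0.
have aB : (T `&` ecball 0 (B + 1)) a by split => //; have := ball_B x'a; rewrite /ecball /=; lra.
have [pp Pp app] := (near j n0j).2 a aB.
have [q [z [Kq zn ppE]]] := (blowupP j pp).1 Pp.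
have ppM l : `|(scale j *: pp + frac j) ord0 l| <= M%:R - 1.
  have ppl : `|pp ord0 l| <= B + 1.
    have := ball_coord_le_B x'a l; have := le_lt_trans (coord_le_edist a pp l) app.
    by rewrite !ler_norml ltr_norml => /andP[? ?] /andP[? ?]; apply/andP; split; lra.
  have : `|scale j * pp ord0 l| <= k%:R * (B + 1) by rewrite normrM ger0_norm ?ler_pM //; lra.
  have /andP[f0 f1] := frac_bounds j l; move: M_large.
  by rewrite !mxE => ML spp; apply: le_trans (ler_normD _ _) _; rewrite (ger0_norm f0); lra.
have [c cj ppc] := code_decomp Kq zn ppE ppM.
exists (scale j *: pp + frac j); first by exists c; [rewrite /= -codeC|rewrite /= ppc addrK].
move=> l; rewrite !mxE.
apply: le_lt_trans dB.
apply: affine_perturbation_le s0j (ball_coord_le_B x'a l) _ _ (t0j l).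
  exact: le_lt_trans (coord_le_edist a pp l) app.
by apply/andP; split => //; lra.
Qed.

Lemma translates_tangent a q c : edist x' a < rho -> K q -> c \in C ->
  s0 *: a + t0 = q + box_pt M c -> T a.
Proof.
move=> x'a Kq cC aE; apply: closed_edist_approx Tcl _ => e e0.
pose D : R := N%:R * (M%:R + 1 + k%:R + 1).
have D0 : 0 <= D by rewrite mulr_ge0 //; have := kR_gt0 R k2; lra.
have e2 : 0 < e / 2 by lra.
have [d [d0 _ dDe dD1]] := exists_small_factor D0 e2.
have B1 : 0 < B + 1 by move: B_ge0; lra.
have [n0 near] := AW_cvg_near blowup_cvg B1 e2.
have [j [n0j codeC /andP[s1 sk] s0j t0j]] := scale_frac_cluster d0 n0.
pose pp := (scale j)^-1 *: (q + box_pt M c - frac j).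
have Pp : blowup K x (r j) pp.
  apply/blowupP; exists q, (box_pt M c + shift j); split => //; first by apply/codeP; rewrite codeC.
  by rewrite /pp scalerA mulfV ?scale1r ?subrK ?addrK // gt_eqF //; lra.
have app : edist a pp <= d * D.
  rewrite /D mulrCA; apply: edist_le_coord_bound => l.
  have wl : `|(q + box_pt M c) ord0 l| <= M%:R + 1.
    have /andP[q0 q1] := K_cube Kq l; have cl := box_pt_bound R c l.
    by rewrite mxE; apply: le_trans (ler_normD _ _) _; rewrite (ger0_norm q0); lra.
  have /andP[s0_ge1 _] := s0_bounds.
  rewrite /pp; move: (q + box_pt M c) aE wl => w aE wl.
  have -> : a = s0^-1 *: (w - t0) by rewrite -aE addrK scalerA mulVf ?scale1r // gt_eqF //; lra.
  rewrite !mxE ![_^-1 * _]mulrC.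
  exact: affine_inv_perturbation_le s0_ge1 s1 s0j wl (t0_bounds l) (t0j l).
have ppB : (blowup K x (r j) `&` ecball 0 (B + 1)) pp.
  split => //; rewrite /ecball /=.
  by have := edist_triangle 0 a pp; have := ball_B x'a; lra.
have [b Tb ppb] := (near j n0j).1 pp ppB.
exists b => //; apply: le_lt_trans (edist_triangle a pp b) _.
lra.
Qed.

Lemma tangent_chart : exists l b, cube_chart K T x' rho l b.
Proof.
have [dx dx0 x_nbhs] := open_cube_nbhs x01.
pose L : R := k%:R * (B + 1) + 1.
have L0 : 0 < L by rewrite /L; have := kR_gt0 R k2; move: B_ge0; nra.
have [n0 r_small] : exists n0, forall j, (n0 <= j)%N -> r j * L < dx.
  have /cvgrPdist_lt/(_ (dx / L) (divr_gt0 dx0 L0)) [n0 _ rn] := r_cvg.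
  by exists n0 => j /rn; rewrite sub0r normrN gtr0_norm // ltr_pdivlMr.
have [j [n0j codeC /andP[s1 sk] _ _]] := scale_frac_cluster ltr01 n0.
have zj := zoom_gt0 j; have zj_neq0 : zoom j != 0 by rewrite gt_eqF.
exists ((zoom j)^-1 * s0), ((zoom j)^-1 *: (t0 + shift j)); split.
  by case/andP: s0_bounds => s0_ge1 _; rewrite mulr_gt0 ?invr_gt0 //; lra.
move=> v x'v; rewrite /aff -scalerA -scalerDr addrA.
have sv_bound l : `|(s0 *: v + t0) ord0 l| <= k%:R * (B + 1).
  rewrite !mxE; apply: le_trans (ler_normD _ _) _; have /andP[t00 t0k] := t0_bounds l.
  have /andP[s0_ge1 s0k] := s0_bounds.
  have : `|s0 * v ord0 l| <= k%:R * B.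
    by rewrite normrM ger0_norm ?ler_pM ?ball_coord_le_B //; lra.
  by rewrite (ger0_norm t00); lra.
split; last split => [Tv|Kv].
- apply: x_nbhs => l.
  have -> : ((zoom j)^-1 *: (s0 *: v + t0 + shift j)) ord0 l - x ord0 l =
      (zoom j)^-1 * ((s0 *: v + t0) ord0 l - frac j ord0 l).
    by rewrite fracE !mxE; field.
  have YL : `|(s0 *: v + t0) ord0 l - frac j ord0 l| <= L.
    have /andP[f0 f1] := frac_bounds j l; have := sv_bound l.
    by rewrite /L => svl; apply: le_trans (ler_normB _ _) _; rewrite (ger0_norm f0); lra.
  have zr : (zoom j)^-1 <= r j by rewrite -[_^-1]mul1r ler_pdivrMr.
  rewrite normrM ger0_norm ?invr_ge0 ?ltW //; apply: le_lt_trans (r_small j n0j).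
  by apply: ler_pM => //; rewrite invr_ge0 ltW.
- have [c cC Kw] := tangent_translates x'v Tv.
  have /codeP zn : c \in code M j by rewrite codeC.
  by have := offsets_scale_in k2 Keq Kw zn; rewrite addrA subrK.
- have [q [z [Kq zn vE]]] := sponge_scale_decomp k2 Keq (lev j) Kv.
  move: vE; rewrite scalerA mulfV // scale1r => vE.
  have yE : s0 *: v + t0 = q + (z - shift j) by rewrite addrA -vE addrK.
  have [|c cj wE] := code_decomp (M := M) Kq zn yE.
    by move=> l; apply: le_trans (sv_bound l) _; move: M_large; lra.
  by apply: translates_tangent x'v Kq _ wE; rewrite -codeC.
Qed.

End Limit.

Lemma tangent_chart_exists x' rho : T x' -> 0 < rho -> exists l b, cube_chart K T x' rho l b.
Proof.
move=> Tx' rho0; pose B := edist 0 x' + rho.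
have ball_B v : edist x' v < rho -> edist 0 v < B.
  by move=> x'v; apply: le_lt_trans (edist_triangle 0 x' v) _; rewrite ltrD2l.
have B_ge0 : 0 <= B by rewrite addr_ge0 ?edist_ge0 ?ltW.
have [M M_large] : exists M : nat, k%:R * (B + 1) + 2 <= M%:R.
  exists (Num.bound (k%:R * (B + 1) + 2)); apply/ltW/archi_boundP.
  by have := kR_gt0 R k2; nra.
have [n1 r_le1] : exists n1, forall j, (n1 <= j)%N -> r j <= 1.
  have /cvgrPdist_lt/(_ 1 ltr01) [n1 _ rn] := r_cvg.
  by exists n1 => j /rn; rewrite sub0r normrN gtr0_norm // => /ltW.
have [C C_rec] := recurrent_value (code M).
have /choice [js js_spec] : forall i, exists j, (i + n1 <= j)%N /\ code M j = C.
  by move=> i; have [j ij codej] := C_rec (i + n1); exists j.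
have js_scale i : 1 <= scale (js i) <= k%:R.
  by apply: lev_scale; apply: r_le1; have := (js_spec i).1; lia.
pose box : set (R * V) :=
  `[1, k%:R]%classic `*` [set v : V | forall l, `[0, k%:R]%classic (v ord0 l)].
have box_compact : compact box.
  apply: compact_setX; first exact: segment_compact.
  exact: (@rV_compact R N (fun _ => `[0, k%:R]%classic) (fun _ => @segment_compact R 0 k%:R)).
have [|[s0 t0] [/= s0_box t0_box] cluster] :=
    compact_cluster (u := fun i => (scale (js i), frac (js i))) box_compact.
  move=> i; split; first by rewrite /= in_itv /=; exact: js_scale.
  move=> l /=; rewrite in_itv /=; have /andP[f0 f1] := frac_bounds (js i) l.
  by rewrite f0 /=; have := kR_gt1 R k2; lra.
apply: (@tangent_chart x' rho B M C s0 t0) => //.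
move=> e e0 n0; have [i n0i [/= s0i t0i]] := cluster _ (nbhsx_ballx (s0, t0) _ e0) n0.
have [ij codej] := js_spec i.
exists (js i); split => //; first by lia.
exact: coord_lt_of_ball t0i.
Qed.

End Tangent.

Theorem lemma10p3 (R : realType) (N : nat) (K : set 'rV[R]_N) :
  self_similar_sponge K ->
  forall x : 'rV[R]_N, open_cube x -> K x ->
  forall T : set 'rV[R]_N, tangent K x T -> locally_self_similar T.
Proof.
move=> [k [m [p [k2 _ p_grid [_ Kc Keq]]]]] x x01 _ T [Tcl _ [r [r_gt0 _ r_cvg blowup_cvg]]].
have /choice [lev lev_scale] : forall j, exists n, r j <= 1 -> 1 <= r j * k%:R ^+ n <= k%:R.
  move=> j; have [rj1|rj1] := lerP (r j) 1; last by exists 0%N.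
  by have [n rn] := exists_pow_rescale k2 (r_gt0 j) rj1; exists n.
apply: (@locally_self_similar_of_charts _ _ K) => [u0 e|x' rho].
  exact: (sponge_zoom k2 p_grid Kc Keq).
exact: (tangent_chart_exists k2 p_grid Kc Keq x01 Tcl r_gt0 r_cvg blowup_cvg lev_scale).
Qed.
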